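(* Let $\lambda \geq 2$ be an integer. Then there exists a positive integer $p''(\lambda)$ such that, with $p = p''(\lambda)$, each of the following three graphs has smallest adjacency eigenvalue less than $-\lambda$: (i) the graph consisting of $\lambda+1$ pairwise disjoint and mutually non-adjacent cliques $K_p$ together with one extra vertex adjacent to all vertices of these cliques; (ii) the graph consisting of two adjacent vertices $s$ and $s'$ and $\lambda+1$ pairwise disjoint, mutually non-adjacent cliques $Q_1,\dots,Q_{\lambda+1}$, each a $K_p$, where $s$ is adjacent to all vertices of $Q_1,\dots,Q_\lambda$ and to none of $Q_{\lambda+1}$, and $s'$ is adjacent to all vertices of $Q_{\lambda+1}$ and to none of $Q_1,\dots,Q_\lambda$; (iii) the graph consisting of a complete graph $K_{n+1}$ with $n = \lambda^2-\lambda+1$, together with a clique $K_p$ on $p$ new vertices, each of which is adjacent to exactly the same $n$ fixed vertices of the $K_{n+1}$ (and not to the remaining vertex).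
   Context: The smallest eigenvalue of a graph refers to the smallest eigenvalue of its adjacency matrix. In the paper these graphs are $G(\mathfrak{h}^{(\lambda+1)},p)$, $G(\mathfrak{h}^{(\lambda,1)},p)$ and $G(\mathfrak{c}_{\lambda^2-\lambda+1},p)$, obtained from Hoffman graphs by replacing each fat vertex by a clique $K_p$ joined to all slim neighbours of that fat vertex. *)

From HB Require Import structures.
From mathcomp Require Import all_boot all_order all_algebra.
From mathcomp Require Import reals.
Set Implicit Arguments. Unset Strict Implicit. Unset Printing Implicit Defensive.
Import Order.TTheory GRing.Theory Num.Theory.
Local Open Scope ring_scope.

Definition adjmx (R : realType) (T : finType) (e : rel T) : 'M[R]_#|T| :=
  \matrix_(i, j) ((e (enum_val i) (enum_val j))%:R : R).

Definition is_smallest_eigenvalue (R : realType) (n : nat) (A : 'M[R]_n) (a : R) :=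
  eigenvalue A a /\ (forall b : R, eigenvalue A b -> a <= b).

Definition graph1_rel (lam p : nat) : rel (option ('I_lam.+1 * 'I_p)) :=
  fun x y => match x, y with
  | None, Some _ => true
  | Some _, None => true
  | Some (i, a), Some (j, b) => (i == j) && (a != b)
  | None, None => false
  end.

(* (ii) vertices s = inl true, s' = inl false; cliques Q_1..Q_{lam+1} are inr (i, a),
   with i : 'I_lam.+1, Q_{lam+1} being i = lam. *)
Definition graph2_rel (lam p : nat) : rel (bool + ('I_lam.+1 * 'I_p)) :=
  fun x y => match x, y with
  | inl u, inl v => u != v
  | inl true, inr (i, _) | inr (i, _), inl true => (i < lam)%N
  | inl false, inr (i, _) | inr (i, _), inl false => (i == lam :> nat)
  | inr (i, a), inr (j, b) => (i == j) && (a != b)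
  end.

(* (iii) K_{n+1} on 'I_n.+1 and K_p on 'I_p; each new vertex is adjacent to the
   n vertices i < n of K_{n+1} and not to the vertex n. *)
Definition graph3_rel (n p : nat) : rel ('I_n.+1 + 'I_p) :=
  fun x y => match x, y with
  | inl i, inl j => i != j
  | inr a, inr b => a != b
  | inl i, inr _ | inr _, inl i => (i < n)%N
  end.

Arguments graph1_rel : clear implicits.
Arguments graph2_rel : clear implicits.
Arguments graph3_rel : clear implicits.
Arguments adjmx : clear implicits.

From HB Require Import structures.
From mathcomp Require Import all_boot all_order all_algebra.
From mathcomp Require Import reals polyrcf ring lra.
Set Implicit Arguments.
Unset Strict Implicit.
Unset Printing Implicit Defensive.
Import Order.TTheory GRing.Theory Num.Theory.
Local Open Scope ring_scope.

(** Each graph has an equitable partition whose cells are its cliques and its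
    remaining vertices.  An eigenvector of the quotient matrix lifts to an
    eigenvector of the adjacency matrix that is constant on the cells, so every
    root of the characteristic polynomial of the quotient matrix
    ([graph1_poly], [graph2_poly], [graph3_poly], written with
    t = x - (p - 1)) is an eigenvalue of the graph.  For p = λ^4 each of these
    polynomials changes sign between -λ and a point far to its left, hence has
    a root below -λ, and the smallest eigenvalue lies below that root. *)

Lemma big_option (R : Type) (idx : R) (op : Monoid.com_law idx) (T : finType)
    (F : option T -> R) :
  \big[op/idx]_x F x = op (F None) (\big[op/idx]_x F (Some x)).
Proof.
rewrite (bigD1 None) //=; congr (op _ _).
rewrite (reindex_omap Some id) //=; last by case.
by apply: eq_bigl => x; rewrite eqxx.
Qed.

Lemma big_pair (R : Type) (idx : R) (op : Monoid.com_law idx) (I J : finType)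
    (F : I * J -> R) :
  \big[op/idx]_u F u = \big[op/idx]_i \big[op/idx]_j F (i, j).
Proof. by rewrite pair_bigA; apply: eq_bigr => -[]. Qed.

Lemma sumr_mul_neq (R : pzRingType) (T : finType) (F : T -> R) i :
  \sum_j F j * (j != i)%:R = \sum_j F j - F i.
Proof.
rewrite (bigD1 i) //= eqxx mulr0 add0r [in RHS](bigD1 i) //= [RHS]addrC addKr.
by apply: eq_bigr => j ->; rewrite mulr1.
Qed.

Lemma poly_root_lt (R : rcfType) (q : {poly R}) a b :
  a <= b -> q.[a] * q.[b] <= 0 -> q.[b] != 0 -> exists2 x, x < b & root q x.
Proof.
move=> a_le_b qab_le0 qb_neq0; have [x] := polyrcf.poly_ivt a_le_b qab_le0.
rewrite in_itv /= => /andP[_ x_le_b] qx0; exists x => //.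
by rewrite lt_neqAle x_le_b andbT; apply: contra_neq qb_neq0 => <-; apply/rootP.
Qed.

Section AdjacencySpectrum.
Variable R : realType.

Lemma adjmx_eigenvalue (T : finType) (e : rel T) (f : T -> R) th y0 :
  f y0 != 0 -> (forall y, \sum_x f x * (e x y)%:R = th * f y) ->
  eigenvalue (adjmx R T e) th.
Proof.
move=> fy0_neq0 f_eig; apply/eigenvalueP; exists (\row_i f (enum_val i)).
  apply/rowP => j; rewrite !mxE -f_eig.
  under eq_bigr do rewrite !mxE.
  by rewrite -(big_enum_val (A := predT) (fun x => f x * (e x (enum_val j))%:R)).
apply: contra_neq fy0_neq0 => /rowP /(_ (enum_rank y0)).
by rewrite !mxE enum_rankK.
Qed.

Lemma smallest_eigenvalue_lt n (A : 'M[R]_n) b :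
  (exists2 t, eigenvalue A t & t < b) ->
  exists a, is_smallest_eigenvalue A a /\ a < b.
Proof.
case=> t At t_lt_b.
have cpA_neq0 : char_poly A != 0 by rewrite monic_neq0 ?char_poly_monic.
have eigE x : eigenvalue A x = (x \in rootsR (char_poly A)).
  by rewrite -(roots_on_rootsR cpA_neq0) eigenvalue_root_char.
have : sorted <%R (rootsR (char_poly A)) by apply: sorted_roots.
move: At; rewrite eigE.
case: (rootsR _) eigE => [//|a s] eigE At /= /(order_path_min lt_trans)/allP a_min.
have a_le x : x \in a :: s -> a <= x by rewrite inE => /predU1P[->//|/a_min/ltW].
exists a; split; last exact: le_lt_trans (a_le t At) t_lt_b.
by split=> [|x]; rewrite eigE ?inE ?eqxx //; apply: a_le.
Qed.

Definition graph1_poly (l p : nat) : {poly R} :=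
  'X * ('X - (p%:R - 1)%:P) - (l.+1 * p)%:R%:P.

Lemma graph1_polyE l p x :
  (graph1_poly l p).[x] = x * (x - (p%:R - 1)) - (l%:R + 1) * p%:R.
Proof. by rewrite !hornerE natrM -natr1. Qed.

Lemma graph1_eigenvalue l p th : (0 < p)%N ->
  root (graph1_poly l p) th -> eigenvalue (adjmx R _ (graph1_rel l p)) th.
Proof.
move=> p_gt0 /rootP; rewrite graph1_polyE; set t := th - (p%:R - 1) => th_root.
apply: (@adjmx_eigenvalue _ _ (fun x => if x is None then t else 1) th
          (Some (ord0, Ordinal p_gt0))); first exact: oner_neq0.
case=> [[j b]|]; rewrite big_option big_pair /=.
- rewrite (bigD1 j) //= [X in _ + (_ + X)]big1 ?addr0 => [|i /negPf ij]; last first.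
    by apply: big1 => a _; rewrite ij mulr0.
  under eq_bigr do rewrite eqxx /=.
  rewrite sumr_mul_neq sumr_const card_ord /t; ring.
- rewrite mulr0 add0r; under eq_bigr do under eq_bigr do rewrite mulr1.
  rewrite !sumr_const !card_ord; lra.
Qed.

Lemma graph1_poly_root_lt lam : (2 <= lam)%N ->
  exists2 th, th < - lam%:R & root (graph1_poly lam (lam ^ 4)) th.
Proof.
move=> lam_ge2; set L : R := lam%:R; set P : R := (lam ^ 4)%:R.
have L_ge2 : 2 <= L by rewrite (ler_nat R 2).
have PE : P = L ^+ 4 by rewrite /P natrX.
have P_ge1 : 1 <= P by rewrite (ler_nat R 1) expn_gt0 ltnW.
have q_lo : 0 <= (graph1_poly lam (lam ^ 4)).[- (L + P + 1)].
  by rewrite graph1_polyE -/L -/P; nra.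
have q_hi : (graph1_poly lam (lam ^ 4)).[- L] < 0.
  rewrite graph1_polyE -/L -/P PE.
  have -> : - L * (- L - (L ^+ 4 - 1)) - (L + 1) * L ^+ 4 = L * L - L - (L * L) * (L * L) by ring.
  have : 4 <= L * L by nra.
  nra.
apply: poly_root_lt (mulr_ge0_le0 q_lo (ltW q_hi)) (ltr0_neq0 q_hi); lra.
Qed.

Definition graph2_poly (l p : nat) : {poly R} :=
  let t := 'X - (p%:R - 1)%:P in
  'X * t * ('X * t - p%:R%:P) - t ^+ 2 - (l * p)%:R%:P * ('X * t - p%:R%:P).

Lemma graph2_polyE l p x : (graph2_poly l p).[x] =
  let t := x - (p%:R - 1) in x * t * (x * t - p%:R) - t ^+ 2 - l%:R * p%:R * (x * t - p%:R).
Proof. by rewrite /= !hornerE natrM. Qed.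

Lemma graph2_eigenvalue l p th : (0 < p)%N -> th < 0 ->
  root (graph2_poly l p) th -> eigenvalue (adjmx R _ (graph2_rel l p)) th.
Proof.
move=> p_gt0 th_lt0 /rootP; rewrite graph2_polyE /=.
set t := th - (p%:R - 1) => th_root.
have t_neq0 : t != 0.
  apply: ltr0_neq0; have : 1 <= p%:R :> R by rewrite (ler_nat R 1).
  rewrite /t; lra.
pose f (x : bool + ('I_l.+1 * 'I_p)) := match x with
  | inl true => t * (th * t - p%:R) | inl false => t ^+ 2
  | inr (i, _) => if (i < l)%N then th * t - p%:R else t end.
apply: (@adjmx_eigenvalue _ _ f th (inl false)); first by rewrite expf_neq0.
case=> [[]|[j b]]; rewrite big_sumType big_bool big_pair /=.
- rewrite big_ord_recr /= ltnn [X in _ + (_ + X)]big1 => [|a _]; last by rewrite mulr0.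
  under eq_bigr => i _ do under eq_bigr do rewrite ltn_ord mulr1.
  rewrite !sumr_const !card_ord; lra.
- rewrite big_ord_recr /= eqxx ltnn big1 => [|i _]; last first.
    by apply: big1 => a _; rewrite ltn_eqF ?mulr0.
  under eq_bigr do rewrite mulr1.
  rewrite sumr_const card_ord -mulr_natl /t; ring.
- rewrite (bigD1 j) //= [X in _ + (_ + X)]big1 ?addr0 => [|i /negPf ij]; last first.
    by apply: big1 => a _; rewrite ij mulr0.
  under eq_bigr do rewrite eqxx /=.
  rewrite sumr_mul_neq sumr_const card_ord.
  have [j_lt_l|j_ge_l] := ltnP j l.
    by rewrite ltn_eqF //= /t; ring.
  have -> : j == l :> nat by rewrite eqn_leq j_ge_l -ltnS ltn_ord.
  by rewrite /= /t; ring.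
Qed.

Lemma graph2_poly_root_lt lam : (2 <= lam)%N ->
  exists2 th, th < - lam%:R & root (graph2_poly lam (lam ^ 4)) th.
Proof.
move=> lam_ge2; set L : R := lam%:R; set P : R := (lam ^ 4)%:R.
have L_ge2 : 2 <= L by rewrite (ler_nat R 2).
have PE : P = L ^+ 4 by rewrite /P natrX.
have P_ge1 : 1 <= P by rewrite (ler_nat R 1) expn_gt0 ltnW.
set K := L * P + P + 1.
have q_lo : 0 <= (graph2_poly lam (lam ^ 4)).[- K].
  rewrite graph2_polyE /= -/L -/P.
  rewrite [leRHS](_ : _ = (K * (K + P - 1) - L * P) * (K * (K + P - 1) - P) - (K + P - 1) ^+ 2);
    last by ring.
  have KP_ge1 : 1 <= K + P - 1 by rewrite /K; nra.
  have K_shift : K + P - 1 <= K * (K + P - 1) - L * P.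
    have : 0 <= (K - 1) * (K + P - 2) by apply: mulr_ge0; rewrite /K; nra.
    rewrite /K; nra.
  have : P <= L * P by nra.
  rewrite subr_ge0 expr2 => LP_ge_P; apply: ler_pM; lra.
have q_hi : (graph2_poly lam (lam ^ 4)).[- L] < 0.
  rewrite graph2_polyE /= -/L -/P.
  rewrite [ltLHS](_ : _ = L * (L - 1) ^+ 2 * (L + P) - (L + P - 1) ^+ 2); last by ring.
  have L3_ge8 : 8 <= L ^+ 3 by rewrite [leRHS](_ : _ = L * L * L); [nra | ring].
  have lt_L3 : L * (L - 1) ^+ 2 < L ^+ 3.
    by rewrite -subr_gt0 [ltRHS](_ : _ = L * (2 * L - 1)); [apply: mulr_gt0; lra | ring].
  have L3_le : L ^+ 3 * (L + P) <= P * P.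
    have P_eq : P = L ^+ 3 * L by rewrite PE; ring.
    have L3_lt_P : 1 + L ^+ 3 <= P by rewrite P_eq; nra.
    by rewrite [leLHS](_ : _ = (1 + L ^+ 3) * P); [nra | rewrite mulrDr mulrDl mul1r -P_eq].
  have P2_le : P * P <= (L + P - 1) ^+ 2 by rewrite expr2; apply: ler_pM; lra.
  have : L * (L - 1) ^+ 2 * (L + P) < L ^+ 3 * (L + P) by rewrite ltr_pM2r //; lra.
  lra.
apply: poly_root_lt (mulr_ge0_le0 q_lo (ltW q_hi)) (ltr0_neq0 q_hi); rewrite /K; nra.
Qed.

Definition graph3_poly (n p : nat) : {poly R} :=
  let t := 'X - (p%:R - 1)%:P in
  'X ^+ 2 * t - ((n%:R - 1)%:P * 'X * t + n%:R%:P * t + (p * n)%:R%:P * 'X).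

Lemma graph3_polyE n p x : (graph3_poly n p).[x] =
  let t := x - (p%:R - 1) in
  x ^+ 2 * t - ((n%:R - 1) * x * t + n%:R * t + p%:R * n%:R * x).
Proof. by rewrite /= !hornerE natrM. Qed.

Lemma graph3_eigenvalue n p th : (0 < p)%N -> (0 < n)%N -> th < 0 ->
  root (graph3_poly n p) th -> eigenvalue (adjmx R _ (graph3_rel n p)) th.
Proof.
move=> p_gt0 n_gt0 th_lt0 /rootP; rewrite graph3_polyE /=.
set t := th - (p%:R - 1) => th_root.
pose f (x : 'I_n.+1 + 'I_p) := match x with
  | inl i => if (i < n)%N then th * t else n%:R * t
  | inr _ => n%:R * th end.
apply: (@adjmx_eigenvalue _ _ f th (inr (Ordinal p_gt0))).
  by rewrite /f mulf_neq0 ?pnatr_eq0 -?lt0n // ltr0_neq0.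
have clique_sum : \sum_(j < n.+1) f (inl j) = n%:R * (th * t) + n%:R * t.
  rewrite big_ord_recr /= ltnn; under eq_bigr do rewrite ltn_ord.
  by rewrite sumr_const card_ord; ring.
case=> [i|b]; rewrite big_sumType /=.
- rewrite (sumr_mul_neq (fun j => f (inl j))) clique_sum sumr_const card_ord /f.
  by case: ltnP => /=; lra.
- rewrite big_ord_recr /= ltnn mulr0 addr0 sumr_mul_neq sumr_const card_ord.
  under eq_bigr do rewrite ltn_ord mulr1.
  by rewrite sumr_const card_ord /t; ring.
Qed.

Lemma graph3_poly_root_lt lam : (2 <= lam)%N ->
  exists2 th, th < - lam%:R & root (graph3_poly (lam ^ 2 - lam + 1) (lam ^ 4)) th.
Proof.
move=> lam_ge2; set L : R := lam%:R; set P : R := (lam ^ 4)%:R.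
set n := (lam ^ 2 - lam + 1)%N; set N : R := n%:R.
have L_ge2 : 2 <= L by rewrite (ler_nat R 2).
have PE : P = L ^+ 4 by rewrite /P natrX.
have P_ge1 : 1 <= P by rewrite (ler_nat R 1) expn_gt0 ltnW.
have NE : N = L ^+ 2 - L + 1.
  by rewrite /N /n natrD natrB ?natrX // -mulnn leq_pmulr // ltnW.
have N_ge1 : 1 <= N by rewrite NE; nra.
set K := N + P.
have q_lo : (graph3_poly n (lam ^ 4)).[- K] <= 0.
  rewrite graph3_polyE /= -/N -/P.
  rewrite [leLHS](_ : _ = - ((N - 1) * K * (K + P - 1) + N * (K + P - 1) * (K - 1)
                             + K * P * (K + P - 1 - N))); last by rewrite /K; ring.
  rewrite oppr_le0 /K; apply: addr_ge0; [apply: addr_ge0|];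
    by apply: mulr_ge0; [apply: mulr_ge0|]; lra.
have q_hi : 0 < (graph3_poly n (lam ^ 4)).[- L].
  rewrite graph3_polyE /= -/N -/P.
  rewrite [ltRHS](_ : _ = 2 * (L * L) * (L - 1) + 2 * L - 1); last by rewrite PE NE; ring.
  have : 0 <= L * L * (L - 1) by apply: mulr_ge0; nra.
  lra.
apply: poly_root_lt (mulr_le0_ge0 q_lo (ltW q_hi)) (lt0r_neq0 q_hi); rewrite /K; nra.
Qed.

End AdjacencySpectrum.

Theorem mainTheorem5 :
  forall lam : nat, (2 <= lam)%N ->
  exists p : nat, (0 < p)%N /\
    forall R : realType,
      (exists a : R, is_smallest_eigenvalue (adjmx R _ (graph1_rel lam p)) a
                     /\ a < - (lam%:R)) /\
      (exists a : R, is_smallest_eigenvalue (adjmx R _ (graph2_rel lam p)) a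
                     /\ a < - (lam%:R)) /\
      (exists a : R, is_smallest_eigenvalue
                       (adjmx R _ (graph3_rel (lam ^ 2 - lam + 1)%N p)) a
                     /\ a < - (lam%:R)).
Proof.
move=> lam lam_ge2; have p_gt0 : (0 < lam ^ 4)%N by rewrite expn_gt0 ltnW.
exists (lam ^ 4)%N; split=> // R.
have neg_of_lt_lam (th : R) : th < - lam%:R -> th < 0.
  by move/lt_le_trans; apply; rewrite oppr_le0.
split; [|split]; apply: smallest_eigenvalue_lt.
- have [th th_lt root_th] := graph1_poly_root_lt R lam_ge2.
  by exists th; first exact: graph1_eigenvalue p_gt0 root_th.
- have [th th_lt root_th] := graph2_poly_root_lt R lam_ge2.
  by exists th; first exact: graph2_eigenvalue p_gt0 (neg_of_lt_lam _ th_lt) root_th.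
- have [th th_lt root_th] := graph3_poly_root_lt R lam_ge2.
  exists th => //; apply: graph3_eigenvalue p_gt0 _ (neg_of_lt_lam _ th_lt) root_th.
  by rewrite addn1.
Qed.
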